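(* Let $\gamma\ge1$, $p(\rho)=\rho^\gamma$, and consider the generalized Riemann problem for $\rho_t+(\rho u)_x=0$, $(\rho u)_t+(\rho u^2+p(\rho))_x=0$ with initial data $\varrho_0=\rho_1\mathcal L^1\lfloor\{x<0\}+\rho_0\delta_{\{x=0\}}+\rho_2\mathcal L^1\lfloor\{x>0\}$, $u(x,0)=u_1\mathsf I_{\{x<0\}}+u_0\mathsf I_{\{x=0\}}+u_2\mathsf I_{\{x>0\}}$, $\rho_1,\rho_2>0$, $\rho_0\ge0$. Consider the single delta shock solutions with front $x=x(t)$ given by the explicit formulas in the context, and suppose they satisfy the over-compressing entropy condition. Then: ($\alpha$) for $\rho_0=0$, each such solution is self-similar; ($\beta$) for $\rho_0>0$: (a) the delta shock front $x=x(t)$ is convex if in addition either (i) $[\rho]=0$ and $u_2\le u_0<\frac{u_1+u_2}{2}$, or (ii) $[\rho]\ne0$ and $u_2\le u_0<\min\{u_1,\frac{[\rho u]+\sqrt a}{[\rho]}\}$; (b) the front is concave if in addition either (i) $[\rho]=0$ and $u_1\ge u_0>\frac{u_1+u_2}{2}$, or (ii) $[\rho]\ne0$ and $u_1\ge u_0>\max\{u_2,\frac{[\rho u]+\sqrt a}{[\rho]}\}$.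
   Context: Notation: $[\rho]=\rho_2-\rho_1$, $[u]=u_2-u_1$, $[u^2]=u_2^2-u_1^2$, $[\rho u]=\rho_2u_2-\rho_1u_1$, $[p]=\rho_2^\gamma-\rho_1^\gamma$; $a=\rho_1\rho_2[u]^2-[\rho][p]$, $b=[\rho]u_0-[\rho u]$, $\Delta(t)=at^2+2\rho_0bt+\rho_0^2$. $\mathcal L^1$ Lebesgue measure, $m\lfloor A$ restriction, $\delta_{\{x=y\}}$ Dirac mass, $\mathsf I_A$ indicator. A single delta shock solution is a Radon measure solution (mass and momentum equations satisfied in the weak measure sense, with $d m/d\varrho=u$, $dn/d\varrho=u^2$ for the momentum and momentum-flux measures $m,n$, and pressure $\rho^\gamma$ on the absolutely continuous part) of the form $\varrho(t)=\rho_1\mathcal L^1\lfloor\{x<x(t)\}+\rho_2\mathcal L^1\lfloor\{x>x(t)\}+w_\rho(t)\delta_{\{x=x(t)\}}$, $u(t)=u_1\mathsf I_{\{x<x(t)\}}+u_2\mathsf I_{\{x>x(t)\}}+x'(t)\mathsf I_{\{x=x(t)\}}$, with $x(0)=0$ and $w_\rho\ge0$. The solutions considered are: for $\rho_0=0$, $[\rho]=0$, $[u]\le0$: $x(t)=\frac{(u_1+u_2)t}{2}$, $w_\rho=-\rho_1[u]t$; for $\rho_0=0$, $[\rho]\ne0$, $a\ge0$: $x(t)=\frac{([\rho u]+\sqrt a)t}{[\rho]}$, $w_\rho=\sqrt a\,t$; for $\rho_0>0$, $[\rho]=0$: $x(t)=\frac{\rho_1[u^2]t^2-2\rho_0u_0t}{2(\rho_1[u]t-\rho_0)}$,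 $w_\rho=-\rho_1[u]t+\rho_0$; for $\rho_0>0$, $[\rho]\ne0$: $x(t)=\frac{[\rho u]t-\rho_0+\sqrt{\Delta(t)}}{[\rho]}$, $w_\rho=\sqrt{\Delta(t)}$ (on the time interval where $\Delta\ge0$). Over-compressing entropy condition: $u_1\ge x'(t)\ge u_2$. *)

From Stdlib Require Import Reals Lra.
From Coquelicot Require Import Coquelicot.
Open Scope R_scope.

Definition pres (gamma r : R) : R := Rpower r gamma.

Definition jrho (r1 r2 : R) : R := r2 - r1.
Definition ju (u1 u2 : R) : R := u2 - u1.
Definition ju2 (u1 u2 : R) : R := u2 ^ 2 - u1 ^ 2.
Definition jrhou (r1 r2 u1 u2 : R) : R := r2 * u2 - r1 * u1.
Definition jp (gamma r1 r2 : R) : R := pres gamma r2 - pres gamma r1.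

Definition acoef (gamma r1 r2 u1 u2 : R) : R :=
  r1 * r2 * (ju u1 u2) ^ 2 - jrho r1 r2 * jp gamma r1 r2.
Definition bcoef (r1 r2 u1 u2 u0 : R) : R :=
  jrho r1 r2 * u0 - jrhou r1 r2 u1 u2.
Definition DeltaD (gamma r1 r2 r0 u1 u2 u0 t : R) : R :=
  acoef gamma r1 r2 u1 u2 * t ^ 2 + 2 * r0 * bcoef r1 r2 u1 u2 u0 * t + r0 ^ 2.

(* rho0 = 0, [rho] = 0, [u] <= 0 *)
Definition front_A (u1 u2 : R) (t : R) : R := (u1 + u2) * t / 2.
Definition weight_A (r1 u1 u2 : R) (t : R) : R := - r1 * ju u1 u2 * t.

(* rho0 = 0, [rho] <> 0, a >= 0 *)
Definition front_B (gamma r1 r2 u1 u2 : R) (t : R) : R :=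
  (jrhou r1 r2 u1 u2 + sqrt (acoef gamma r1 r2 u1 u2)) * t / jrho r1 r2.
Definition weight_B (gamma r1 r2 u1 u2 : R) (t : R) : R :=
  sqrt (acoef gamma r1 r2 u1 u2) * t.

(* rho0 > 0, [rho] = 0 *)
Definition front_C (r1 r0 u1 u2 u0 : R) (t : R) : R :=
  (r1 * ju2 u1 u2 * t ^ 2 - 2 * r0 * u0 * t) / (2 * (r1 * ju u1 u2 * t - r0)).
Definition weight_C (r1 r0 u1 u2 : R) (t : R) : R := - r1 * ju u1 u2 * t + r0.

(* rho0 > 0, [rho] <> 0 (on the time interval where DeltaD >= 0) *)
Definition front_D (gamma r1 r2 r0 u1 u2 u0 : R) (t : R) : R :=
  (jrhou r1 r2 u1 u2 * t - r0 + sqrt (DeltaD gamma r1 r2 r0 u1 u2 u0 t)) / jrho r1 r2.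
Definition weight_D (gamma r1 r2 r0 u1 u2 u0 : R) (t : R) : R :=
  sqrt (DeltaD gamma r1 r2 r0 u1 u2 u0 t).

(* time interval of existence in case D: the maximal interval [0,T) or [0,T]
   starting at 0 on which DeltaD >= 0 *)
Definition dom_D (gamma r1 r2 r0 u1 u2 u0 : R) (t : R) : Prop :=
  0 <= t /\ forall s, 0 <= s <= t -> 0 <= DeltaD gamma r1 r2 r0 u1 u2 u0 s.

Definition vel (u1 u2 : R) (xf : R -> R) (t y : R) : R :=
  if Rlt_dec y (xf t) then u1 else if Rlt_dec (xf t) y then u2 else Derive xf t.

(* Self-similarity of the single delta shock solution
   rho(t) = rho1 L^1|{x<x(t)} + rho2 L^1|{x>x(t)} + w(t) delta_{x=x(t)},
   u as in [vel]: invariance under (x,t) -> (lambda x, lambda t), i.e. the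
   absolutely continuous part is scale invariant (front scales linearly), the
   Dirac weight scales like the length (w(lambda t) = lambda w(t)), and the
   velocity satisfies u(lambda x, lambda t) = u(x, t). *)
Definition self_similar (u1 u2 : R) (xf wf : R -> R) : Prop :=
  forall lam t, 0 < lam -> 0 <= t ->
    xf (lam * t) = lam * xf t /\ wf (lam * t) = lam * wf t /\
    (0 < t -> forall y, vel u1 u2 xf (lam * t) (lam * y) = vel u1 u2 xf t y).

Definition overcompressing (u1 u2 : R) (xf : R -> R) (D : R -> Prop) : Prop :=
  forall t, D t -> u2 <= Derive xf t <= u1.

Definition convex_on (I : R -> Prop) (f : R -> R) : Prop :=
  forall s t th, I s -> I t -> 0 <= th <= 1 ->
    f (th * s + (1 - th) * t) <= th * f s + (1 - th) * f t.
Definition concave_on (I : R -> Prop) (f : R -> R) : Prop :=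
  forall s t th, I s -> I t -> 0 <= th <= 1 ->
    th * f s + (1 - th) * f t <= f (th * s + (1 - th) * t).

(** For [rho0 = 0] the front and the Dirac weight are linear in [t], so the
    solution is invariant under [(x,t) -> (lam x, lam t)].  For [rho0 > 0] the
    front is an affine function of [t] plus a multiple of a function of known
    curvature.  When [[rho] = 0] that function is [1 / (k t + rho0)] with
    [k = rho1 (u1 - u2) > 0], which is convex, and its coefficient has the sign
    of [(u1 + u2)/2 - u0].  When [[rho] <> 0] it is [sqrt Delta(t)] with
    coefficient [1/[rho]], and [Delta(t) = (rho0 + b t)^2 + (a - b^2) t^2]: for
    [a >= b^2] the square root is a Euclidean norm of an affine function of [t],
    hence convex (Minkowski), while for [a <= b^2] it is a Lorentzian norm of a
    future-directed vector, hence concave (reverse Minkowski).  The identity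
    [b - sqrt a = [rho] (u0 - ([rho u] + sqrt a)/[rho])], together with
    [b = rho2 (u0 - u2) + rho1 (u1 - u0) >= 0], turns the bounds on [u0] into the
    required signs. *)

From Stdlib Require Import Reals Lra.
From Coquelicot Require Import Coquelicot.
Open Scope R_scope.

Lemma Derive_linear (f : R -> R) (k t : R) :
  (forall s, f s = k * s) -> Derive f t = k.
Proof.
  intros Hf. rewrite (Derive_ext f (fun s => k * s)) by exact Hf.
  apply is_derive_unique. auto_derive; auto. ring.
Qed.

Lemma self_similar_linear (u1 u2 : R) (xf wf : R -> R) (k w : R) :
  (forall t, xf t = k * t) -> (forall t, wf t = w * t) -> self_similar u1 u2 xf wf.
Proof.
  intros Hx Hw lam t Hlam _.
  split; [rewrite !Hx; ring|]. split; [rewrite !Hw; ring|].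
  intros _ y. unfold vel. rewrite !(Derive_linear xf k) by exact Hx. rewrite !Hx.
  destruct (Rlt_dec (lam * y) (k * (lam * t))), (Rlt_dec y (k * t));
    try reflexivity; try (exfalso; nra).
  destruct (Rlt_dec (k * (lam * t)) (lam * y)), (Rlt_dec (k * t) y);
    try reflexivity; exfalso; nra.
Qed.

Lemma front_A_self_similar (r1 u1 u2 : R) :
  self_similar u1 u2 (front_A u1 u2) (weight_A r1 u1 u2).
Proof.
  apply self_similar_linear with ((u1 + u2) / 2) (- r1 * ju u1 u2);
    intros; unfold front_A, weight_A; field.
Qed.

Lemma front_B_self_similar (gamma r1 r2 u1 u2 : R) : jrho r1 r2 <> 0 ->
  self_similar u1 u2 (front_B gamma r1 r2 u1 u2) (weight_B gamma r1 r2 u1 u2).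
Proof.
  intros Hj.
  apply self_similar_linear
    with ((jrhou r1 r2 u1 u2 + sqrt (acoef gamma r1 r2 u1 u2)) / jrho r1 r2)
         (sqrt (acoef gamma r1 r2 u1 u2));
    intros; unfold front_B, weight_B; field; exact Hj.
Qed.

Definition convex_set (I : R -> Prop) : Prop :=
  forall s t th, I s -> I t -> 0 <= th <= 1 -> I (th * s + (1 - th) * t).

Lemma convex_set_nonneg : convex_set (fun t => 0 <= t).
Proof. intros s t th Hs Ht Hth. nra. Qed.

Lemma convex_set_initial_segment (P : R -> Prop) :
  convex_set (fun t => 0 <= t /\ forall s, 0 <= s <= t -> P s).
Proof.
  intros s t th [Hs HPs] [Ht HPt] Hth. split; [nra|].
  intros r Hr. destruct (Rle_or_lt s t).
  - apply HPt. nra.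
  - apply HPs. nra.
Qed.

Section AffinePerturbation.

Variables (I : R -> Prop) (f g : R -> R) (al be c : R).
Hypothesis convex_I : convex_set I.
Hypothesis f_eq : forall t, I t -> f t = al * t + be + c * g t.

Lemma convex_on_affine_add : 0 <= c -> convex_on I g -> convex_on I f.
Proof.
  intros Hc Hg s t th Hs Ht Hth. rewrite !f_eq by auto.
  specialize (Hg s t th Hs Ht Hth). nra.
Qed.

Lemma convex_on_affine_sub : c <= 0 -> concave_on I g -> convex_on I f.
Proof.
  intros Hc Hg s t th Hs Ht Hth. rewrite !f_eq by auto.
  specialize (Hg s t th Hs Ht Hth). nra.
Qed.

Lemma concave_on_affine_add : 0 <= c -> concave_on I g -> concave_on I f.
Proof.
  intros Hc Hg s t th Hs Ht Hth. rewrite !f_eq by auto.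
  specialize (Hg s t th Hs Ht Hth). nra.
Qed.

Lemma concave_on_affine_sub : c <= 0 -> convex_on I g -> concave_on I f.
Proof.
  intros Hc Hg s t th Hs Ht Hth. rewrite !f_eq by auto.
  specialize (Hg s t th Hs Ht Hth). nra.
Qed.

End AffinePerturbation.

Lemma Rinv_convex_comb (x y th : R) : 0 < x -> 0 < y -> 0 <= th <= 1 ->
  / (th * x + (1 - th) * y) <= th / x + (1 - th) / y.
Proof.
  intros Hx Hy Hth. assert (Hm : 0 < th * x + (1 - th) * y) by nra.
  assert (Hgap : th / x + (1 - th) / y - / (th * x + (1 - th) * y)
                 = th * (1 - th) * (x - y) ^ 2 / (x * y * (th * x + (1 - th) * y))).
  { field. repeat split; lra. }
  assert (0 <= th * (1 - th) * (x - y) ^ 2 / (x * y * (th * x + (1 - th) * y))).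
  { apply Rdiv_le_0_compat.
    - apply Rmult_le_pos; [nra | apply pow2_ge_0].
    - apply Rmult_lt_0_compat; [apply Rmult_lt_0_compat|]; assumption. }
  lra.
Qed.

Lemma inv_affine_convex (k r0 : R) : 0 <= k -> 0 < r0 ->
  convex_on (fun t => 0 <= t) (fun t => / (k * t + r0)).
Proof.
  intros Hk Hr0 s t th Hs Ht Hth.
  replace (k * (th * s + (1 - th) * t) + r0)
    with (th * (k * s + r0) + (1 - th) * (k * t + r0)) by ring.
  apply Rinv_convex_comb; nra.
Qed.

Lemma front_C_eq (r1 r0 u1 u2 u0 t : R) :
  0 < r1 -> 0 < r0 -> u2 < u1 -> 0 <= t ->
  let k := r1 * (u1 - u2) in let m := (u1 + u2) / 2 in
  front_C r1 r0 u1 u2 u0 t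
  = m * t + r0 * (u0 - m) / k + r0 ^ 2 * (m - u0) / k * / (k * t + r0).
Proof.
  intros Hr1 Hr0 Hu Ht k m. subst k m.
  assert (0 < r1 * (u1 - u2)) by nra. assert (0 <= r1 * (u1 - u2) * t) by nra.
  unfold front_C, ju2, ju. field. split; nra.
Qed.

Lemma front_C_convex (r1 r0 u1 u2 u0 : R) :
  0 < r1 -> 0 < r0 -> u2 < u1 -> u0 <= (u1 + u2) / 2 ->
  convex_on (fun t => 0 <= t) (front_C r1 r0 u1 u2 u0).
Proof.
  intros Hr1 Hr0 Hu Hu0. assert (Hk : 0 < r1 * (u1 - u2)) by nra.
  eapply convex_on_affine_add;
    [apply convex_set_nonneg | intros t Ht; apply front_C_eq; assumption | |
     apply inv_affine_convex; lra].
  apply Rdiv_le_0_compat; nra.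
Qed.

Lemma front_C_concave (r1 r0 u1 u2 u0 : R) :
  0 < r1 -> 0 < r0 -> u2 < u1 -> (u1 + u2) / 2 <= u0 ->
  concave_on (fun t => 0 <= t) (front_C r1 r0 u1 u2 u0).
Proof.
  intros Hr1 Hr0 Hu Hu0. assert (Hk : 0 < r1 * (u1 - u2)) by nra.
  eapply concave_on_affine_sub;
    [apply convex_set_nonneg | intros t Ht; apply front_C_eq; assumption | |
     apply inv_affine_convex; lra].
  assert (0 < / (r1 * (u1 - u2))) by (apply Rinv_0_lt_compat; lra).
  assert (r0 ^ 2 * ((u1 + u2) / 2 - u0) <= 0) by (assert (0 < r0 ^ 2) by nra; nra).
  unfold Rdiv. nra.
Qed.

Lemma pow2_le_nonneg (x y : R) : 0 <= y -> x ^ 2 <= y ^ 2 -> x <= y.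
Proof. intros Hy H. nra. Qed.

Lemma sqrt_le_of_pow2 (x y : R) : 0 <= y -> x <= y ^ 2 -> sqrt x <= y.
Proof. intros Hy H. rewrite <- (sqrt_pow2 y Hy). apply sqrt_le_1_alt, H. Qed.

Lemma le_sqrt_of_pow2 (x y : R) : 0 <= x -> x ^ 2 <= y -> x <= sqrt y.
Proof. intros Hx H. rewrite <- (sqrt_pow2 x Hx). apply sqrt_le_1_alt, H. Qed.

Section WeightedNorms.

Variables (c th X1 Y1 X2 Y2 : R).
Hypotheses (c_ge0 : 0 <= c) (th_01 : 0 <= th <= 1).

Let comb (p q : R) : R := th * p + (1 - th) * q.

Lemma sqrt_sum_sq_convex_comb :
  sqrt (comb X1 X2 ^ 2 + c * comb Y1 Y2 ^ 2)
  <= comb (sqrt (X1 ^ 2 + c * Y1 ^ 2)) (sqrt (X2 ^ 2 + c * Y2 ^ 2)).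
Proof.
  unfold comb.
  assert (HA1 : 0 <= X1 ^ 2 + c * Y1 ^ 2) by nra.
  assert (HA2 : 0 <= X2 ^ 2 + c * Y2 ^ 2) by nra.
  pose proof (sqrt_pos (X1 ^ 2 + c * Y1 ^ 2)) as Hq1.
  pose proof (sqrt_pos (X2 ^ 2 + c * Y2 ^ 2)) as Hq2.
  pose proof (pow2_sqrt _ HA1) as Eq1. pose proof (pow2_sqrt _ HA2) as Eq2.
  set (q1 := sqrt (X1 ^ 2 + c * Y1 ^ 2)) in *.
  set (q2 := sqrt (X2 ^ 2 + c * Y2 ^ 2)) in *.
  assert (Hcs : X1 * X2 + c * Y1 * Y2 <= q1 * q2).
  { apply pow2_le_nonneg; [nra|].
    replace ((q1 * q2) ^ 2) with (q1 ^ 2 * q2 ^ 2) by ring. rewrite Eq1, Eq2.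
    assert (0 <= c * (X1 * Y2 - X2 * Y1) ^ 2) by (apply Rmult_le_pos; [lra | apply pow2_ge_0]).
    assert ((X1 ^ 2 + c * Y1 ^ 2) * (X2 ^ 2 + c * Y2 ^ 2) - (X1 * X2 + c * Y1 * Y2) ^ 2
            = c * (X1 * Y2 - X2 * Y1) ^ 2) by ring.
    lra. }
  apply sqrt_le_of_pow2; [nra|].
  replace ((th * q1 + (1 - th) * q2) ^ 2)
    with (th ^ 2 * q1 ^ 2 + (1 - th) ^ 2 * q2 ^ 2 + 2 * (th * (1 - th)) * (q1 * q2))
    by ring.
  rewrite Eq1, Eq2. assert (0 <= th * (1 - th)) by nra. nra.
Qed.

Lemma sqrt_diff_sq_concave_comb :
  0 < X1 -> 0 < X2 -> c * Y1 ^ 2 <= X1 ^ 2 -> c * Y2 ^ 2 <= X2 ^ 2 ->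
  comb (sqrt (X1 ^ 2 - c * Y1 ^ 2)) (sqrt (X2 ^ 2 - c * Y2 ^ 2))
  <= sqrt (comb X1 X2 ^ 2 - c * comb Y1 Y2 ^ 2).
Proof.
  unfold comb. intros HX1 HX2 HB1 HB2.
  assert (HB1' : 0 <= X1 ^ 2 - c * Y1 ^ 2) by lra.
  assert (HB2' : 0 <= X2 ^ 2 - c * Y2 ^ 2) by lra.
  pose proof (sqrt_pos (X1 ^ 2 - c * Y1 ^ 2)) as Hq1.
  pose proof (sqrt_pos (X2 ^ 2 - c * Y2 ^ 2)) as Hq2.
  pose proof (pow2_sqrt _ HB1') as Eq1. pose proof (pow2_sqrt _ HB2') as Eq2.
  set (q1 := sqrt (X1 ^ 2 - c * Y1 ^ 2)) in *.
  set (q2 := sqrt (X2 ^ 2 - c * Y2 ^ 2)) in *.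
  assert (Htime : c * Y1 * Y2 <= X1 * X2).
  { apply pow2_le_nonneg; [nra|].
    replace ((c * Y1 * Y2) ^ 2) with ((c * Y1 ^ 2) * (c * Y2 ^ 2)) by ring.
    replace ((X1 * X2) ^ 2) with (X1 ^ 2 * X2 ^ 2) by ring.
    apply Rmult_le_compat; nra. }
  assert (Hrcs : q1 * q2 <= X1 * X2 - c * Y1 * Y2).
  { apply pow2_le_nonneg; [lra|].
    replace ((q1 * q2) ^ 2) with (q1 ^ 2 * q2 ^ 2) by ring. rewrite Eq1, Eq2.
    assert (0 <= c * (X1 * Y2 - X2 * Y1) ^ 2) by (apply Rmult_le_pos; [lra | apply pow2_ge_0]).
    assert ((X1 * X2 - c * Y1 * Y2) ^ 2 - (X1 ^ 2 - c * Y1 ^ 2) * (X2 ^ 2 - c * Y2 ^ 2)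
            = c * (X1 * Y2 - X2 * Y1) ^ 2) by ring.
    lra. }
  apply le_sqrt_of_pow2; [nra|].
  replace ((th * q1 + (1 - th) * q2) ^ 2)
    with (th ^ 2 * q1 ^ 2 + (1 - th) ^ 2 * q2 ^ 2 + 2 * (th * (1 - th)) * (q1 * q2))
    by ring.
  rewrite Eq1, Eq2. assert (0 <= th * (1 - th)) by nra. nra.
Qed.

End WeightedNorms.

Definition Dquad (a b r0 t : R) : R := a * t ^ 2 + 2 * r0 * b * t + r0 ^ 2.

Lemma sqrt_Dquad_convex (I : R -> Prop) (a b r0 : R) : b ^ 2 <= a ->
  convex_on I (fun t => sqrt (Dquad a b r0 t)).
Proof.
  intros Hab s t th _ _ Hth.
  assert (E : forall x, Dquad a b r0 x = (r0 + b * x) ^ 2 + (a - b ^ 2) * x ^ 2)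
    by (intros; unfold Dquad; ring).
  rewrite !E.
  replace (r0 + b * (th * s + (1 - th) * t))
    with (th * (r0 + b * s) + (1 - th) * (r0 + b * t)) by ring.
  apply sqrt_sum_sq_convex_comb; lra.
Qed.

Lemma sqrt_Dquad_concave (I : R -> Prop) (a b r0 : R) :
  a <= b ^ 2 -> 0 <= b -> 0 < r0 ->
  (forall t, I t -> 0 <= t /\ 0 <= Dquad a b r0 t) ->
  concave_on I (fun t => sqrt (Dquad a b r0 t)).
Proof.
  intros Hab Hb Hr0 HI s t th Hs Ht Hth.
  destruct (HI s Hs) as [Hs0 HDs], (HI t Ht) as [Ht0 HDt].
  assert (E : forall x, Dquad a b r0 x = (r0 + b * x) ^ 2 - (b ^ 2 - a) * x ^ 2)
    by (intros; unfold Dquad; ring).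
  rewrite E in HDs, HDt |- *. rewrite !E.
  replace (r0 + b * (th * s + (1 - th) * t))
    with (th * (r0 + b * s) + (1 - th) * (r0 + b * t)) by ring.
  apply sqrt_diff_sq_concave_comb; nra.
Qed.

Lemma bcoef_nonneg (r1 r2 u1 u2 u0 : R) : 0 <= r1 -> 0 <= r2 -> u2 <= u0 <= u1 ->
  0 <= bcoef r1 r2 u1 u2 u0.
Proof. intros. unfold bcoef, jrho, jrhou. nra. Qed.

Lemma bcoef_sub_sqrt (gamma r1 r2 u1 u2 u0 : R) : jrho r1 r2 <> 0 ->
  bcoef r1 r2 u1 u2 u0 - sqrt (acoef gamma r1 r2 u1 u2)
  = jrho r1 r2 * (u0 - (jrhou r1 r2 u1 u2 + sqrt (acoef gamma r1 r2 u1 u2)) / jrho r1 r2).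
Proof. intros Hj. unfold bcoef. field. exact Hj. Qed.

Section FrontD.

Variables (gamma r1 r2 r0 u1 u2 u0 : R).

Let a := acoef gamma r1 r2 u1 u2.
Let b := bcoef r1 r2 u1 u2 u0.
Let j := jrho r1 r2.
Let sigma := (jrhou r1 r2 u1 u2 + sqrt a) / j.
Let I := dom_D gamma r1 r2 r0 u1 u2 u0.

Hypotheses (j_neq0 : j <> 0) (a_ge0 : 0 <= a) (r0_gt0 : 0 < r0) (b_ge0 : 0 <= b).

Lemma front_D_eq (t : R) : front_D gamma r1 r2 r0 u1 u2 u0 t
  = jrhou r1 r2 u1 u2 / j * t + - r0 / j + / j * sqrt (Dquad a b r0 t).
Proof. unfold front_D, DeltaD, Dquad, a, b, j, Rdiv. ring. Qed.

Lemma convex_set_dom_D : convex_set I.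
Proof. apply convex_set_initial_segment. Qed.

Lemma dom_D_Dquad_nonneg (t : R) : I t -> 0 <= t /\ 0 <= Dquad a b r0 t.
Proof. intros [Ht HD]. split; [lra|]. apply HD. lra. Qed.

Lemma b_sqrt_a_gap : b - sqrt a = j * (u0 - sigma).
Proof. apply bcoef_sub_sqrt, j_neq0. Qed.

Lemma pow2_le_of_le_sqrt : b <= sqrt a -> b ^ 2 <= a.
Proof. intros H. rewrite <- (pow2_sqrt a a_ge0). apply pow_incr. lra. Qed.

Lemma le_pow2_of_sqrt_le : sqrt a <= b -> a <= b ^ 2.
Proof.
  intros H. rewrite <- (pow2_sqrt a a_ge0). apply pow_incr.
  split; [apply sqrt_pos | exact H].
Qed.

Lemma front_D_convex : u0 <= sigma -> convex_on I (front_D gamma r1 r2 r0 u1 u2 u0).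
Proof.
  intros Hu0. pose proof b_sqrt_a_gap as Hgap.
  destruct (Rlt_or_le 0 j) as [Hj | Hj].
  - assert (0 < / j) by (apply Rinv_0_lt_compat; lra).
    eapply convex_on_affine_add;
      [apply convex_set_dom_D | intros t _; apply front_D_eq | lra |].
    apply sqrt_Dquad_convex, pow2_le_of_le_sqrt. nra.
  - assert (/ j < 0) by (apply Rinv_lt_0_compat; lra).
    eapply convex_on_affine_sub;
      [apply convex_set_dom_D | intros t _; apply front_D_eq | lra |].
    apply sqrt_Dquad_concave; [apply le_pow2_of_sqrt_le; nra | exact b_ge0 | exact r0_gt0 |].
    exact dom_D_Dquad_nonneg.
Qed.

Lemma front_D_concave : sigma <= u0 -> concave_on I (front_D gamma r1 r2 r0 u1 u2 u0).
Proof.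
  intros Hu0. pose proof b_sqrt_a_gap as Hgap.
  destruct (Rlt_or_le 0 j) as [Hj | Hj].
  - assert (0 < / j) by (apply Rinv_0_lt_compat; lra).
    eapply concave_on_affine_add;
      [apply convex_set_dom_D | intros t _; apply front_D_eq | lra |].
    apply sqrt_Dquad_concave; [apply le_pow2_of_sqrt_le; nra | exact b_ge0 | exact r0_gt0 |].
    exact dom_D_Dquad_nonneg.
  - assert (/ j < 0) by (apply Rinv_lt_0_compat; lra).
    eapply concave_on_affine_sub;
      [apply convex_set_dom_D | intros t _; apply front_D_eq | lra |].
    apply sqrt_Dquad_convex, pow2_le_of_le_sqrt. nra.
Qed.

End FrontD.

Theorem proposition3 (gamma r1 r2 r0 u1 u2 u0 : R) :
  1 <= gamma -> 0 < r1 -> 0 < r2 -> 0 <= r0 ->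
  (* (alpha) rho0 = 0 *)
  ( r0 = 0 ->
    ( (jrho r1 r2 = 0 -> ju u1 u2 <= 0 ->
         overcompressing u1 u2 (front_A u1 u2) (fun t => 0 < t) ->
         self_similar u1 u2 (front_A u1 u2) (weight_A r1 u1 u2))
    /\ (jrho r1 r2 <> 0 -> 0 <= acoef gamma r1 r2 u1 u2 ->
         overcompressing u1 u2 (front_B gamma r1 r2 u1 u2) (fun t => 0 < t) ->
         self_similar u1 u2 (front_B gamma r1 r2 u1 u2) (weight_B gamma r1 r2 u1 u2)) ) )
  /\
  (* (beta) rho0 > 0 *)
  ( 0 < r0 ->
    (* (a) convexity *)
    ( (jrho r1 r2 = 0 ->
         overcompressing u1 u2 (front_C r1 r0 u1 u2 u0) (fun t => 0 < t) ->
         u2 <= u0 < (u1 + u2) / 2 ->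
         convex_on (fun t => 0 <= t) (front_C r1 r0 u1 u2 u0))
    /\ (jrho r1 r2 <> 0 -> 0 <= acoef gamma r1 r2 u1 u2 ->
         overcompressing u1 u2 (front_D gamma r1 r2 r0 u1 u2 u0)
           (fun t => 0 < t /\ forall s, 0 <= s <= t -> 0 < DeltaD gamma r1 r2 r0 u1 u2 u0 s) ->
         u2 <= u0 < Rmin u1 ((jrhou r1 r2 u1 u2 + sqrt (acoef gamma r1 r2 u1 u2)) / jrho r1 r2) ->
         convex_on (dom_D gamma r1 r2 r0 u1 u2 u0) (front_D gamma r1 r2 r0 u1 u2 u0)) )
    /\
    (* (b) concavity *)
    ( (jrho r1 r2 = 0 ->
         overcompressing u1 u2 (front_C r1 r0 u1 u2 u0) (fun t => 0 < t) ->
         (u1 + u2) / 2 < u0 <= u1 ->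
         concave_on (fun t => 0 <= t) (front_C r1 r0 u1 u2 u0))
    /\ (jrho r1 r2 <> 0 -> 0 <= acoef gamma r1 r2 u1 u2 ->
         overcompressing u1 u2 (front_D gamma r1 r2 r0 u1 u2 u0)
           (fun t => 0 < t /\ forall s, 0 <= s <= t -> 0 < DeltaD gamma r1 r2 r0 u1 u2 u0 s) ->
         Rmax u2 ((jrhou r1 r2 u1 u2 + sqrt (acoef gamma r1 r2 u1 u2)) / jrho r1 r2) < u0 <= u1 ->
         concave_on (dom_D gamma r1 r2 r0 u1 u2 u0) (front_D gamma r1 r2 r0 u1 u2 u0)) ) ).
Proof.
  intros _ Hr1 Hr2 Hr0. split.
  { intros _. split.
    - intros _ _ _. apply front_A_self_similar.
    - intros Hj _ _. apply front_B_self_similar, Hj. }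
  set (sigma := (jrhou r1 r2 u1 u2 + sqrt (acoef gamma r1 r2 u1 u2)) / jrho r1 r2).
  intros Hr0p. split; split.
  - intros _ _ Hu. apply front_C_convex; lra.
  - intros Hj Ha _ Hu.
    pose proof (Rmin_l u1 sigma). pose proof (Rmin_r u1 sigma).
    apply front_D_convex; try assumption; [apply bcoef_nonneg |]; unfold sigma in *; lra.
  - intros _ _ Hu. apply front_C_concave; lra.
  - intros Hj Ha _ Hu.
    pose proof (Rmax_l u2 sigma). pose proof (Rmax_r u2 sigma).
    apply front_D_concave; try assumption; [apply bcoef_nonneg |]; unfold sigma in *; lra.
Qed.
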